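(* Let $x=(x_1,\ldots,x_n)$ and $y=(y_1,\ldots,y_m)$ be observed samples, let $\mathbb{P}^{x,y}$ be the posterior distribution of the pair $(P_1,P_2)$ given $\mathcal{D}_{n,m}=\{x,y\}$. Let $d$ be a distance between probability measures, $M=\sup_{P_1,P_2} d(P_1,P_2)\in(0,\infty]$, let $w:[0,M)\to(0,\infty]$ be a probability density function on $[0,M)$ and $W(t)=\int_0^t w(\varepsilon)\,d\varepsilon$. Define $\mathrm{WIKS}(\mathcal{D}_{n,m})=\int_0^M w(\varepsilon)\,\mathbb{P}^{x,y}(d(P_1,P_2)>\varepsilon)\,d\varepsilon$. Then: (a) $0\le \mathrm{WIKS}(\mathcal{D}_{n,m})\le 1$ for every observed sample $\mathcal{D}_{n,m}$; (b) $\mathrm{WIKS}(\mathcal{D}_{n,m})=0$ if and only if $d(P_1,P_2)=0$ $\mathbb{P}^{x,y}$-almost surely; (c) $\mathrm{WIKS}(\mathcal{D}_{n,m})=1$ if and only if $d(P_1,P_2)=M$ $\mathbb{P}^{x,y}$-almost surely; (d) WIKS is increasing with respect to $d(P_1,P_2)$: if $\mathcal{D}$ and $\mathcal{D}'$ are two observed data sets such that the posterior distribution of $d(P_1,P_2)$ given $\mathcal{D}'$ is stochastically greater than that given $\mathcal{D}$, i.e. $\mathbb{P}^{\mathcal{D}}(d(P_1,P_2)\ge t)\le \mathbb{P}^{\mathcal{D}'}(d(P_1,P_2)\ge t)$ for all $t>0$, then $\mathrm{WIKS}(\mathcal{D})\le \mathrm{WIKS}(\mathcal{D}')$.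
   Context: Bayesian two-sample setting: $(P_1,P_2)$ is a random pair of probability distributions with some prior; conditionally on $(P_1,P_2)$, $x_1,\ldots,x_n$ are i.i.d. from $P_1$ and $y_1,\ldots,y_m$ are i.i.d. from $P_2$, independently. $\mathbb{P}^{\mathcal{D}}$ denotes the posterior given data $\mathcal{D}$. *)

From HB Require Import structures.
From mathcomp Require Import all_boot all_order all_algebra.
From mathcomp Require Import all_classical all_reals all_analysis.
From mathcomp Require Import measurable_realfun.
Set Implicit Arguments. Unset Strict Implicit. Unset Printing Implicit Defensive.
Import Order.TTheory GRing.Theory Num.Theory.
Local Open Scope classical_set_scope.
Local Open Scope ring_scope.
Local Open Scope ereal_scope.

(* Space of probability distributions on the observation space S, with the
   standard sigma-algebra generated by the evaluation maps (pprobability). *)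
Definition Dist {dS : measure_display} (S : measurableType dS) (R : realType) :=
  pprobability S R.

Definition is_distance {T : Type} {R : realType} (d : T -> T -> R) : Prop :=
  [/\ forall P Q, (0 <= d P Q)%R,
      forall P Q, d P Q = 0%R <-> P = Q,
      forall P Q, d P Q = d Q P &
      forall P Q U, (d P U <= d P Q + d Q U)%R].

Definition supdist {T : Type} {R : realType} (d : T -> T -> R) : \bar R :=
  ereal_sup (range (fun PQ : T * T => (d PQ.1 PQ.2)%:E)).

Definition intM {R : realType} (M : \bar R) : set R :=
  [set e : R | (0 <= e)%R /\ e%:E < M].

Definition is_density_on {R : realType} (M : \bar R) (w : R -> \bar R) : Prop :=
  [/\ measurable_fun (intM M : set R) (w : R -> \bar R),
      forall e, intM M e -> 0 < w e &
      \int[lebesgue_measure]_(e in intM M) w e = 1].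

Definition Wcdf {R : realType} (w : R -> \bar R) (t : R) : \bar R :=
  \int[lebesgue_measure]_(e in `[0%R, t]) w e.

Definition WIKS {dS : measure_display} {S : measurableType dS} {R : realType}
  (d : Dist S R -> Dist S R -> R) (w : R -> \bar R)
  (post : probability (Dist S R * Dist S R)%type R) : \bar R :=
  \int[lebesgue_measure]_(e in intM (supdist d))
     (w e * post [set PQ | (e < d PQ.1 PQ.2)%R]).

From HB Require Import structures.
From mathcomp Require Import all_boot all_order all_algebra.
From mathcomp Require Import all_classical all_reals all_analysis.
From mathcomp Require Import measurable_realfun.
From mathcomp Require Import lra.
Import Order.TTheory GRing.Theory Num.Theory.
Local Open Scope classical_set_scope.
Local Open Scope ring_scope.
Local Open Scope ereal_scope.

(* WIKS integrates w(e) against the posterior survival function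
   G(e) = P(d > e).  As 0 <= G <= 1 and w is a probability density on [0, M),
   0 <= WIKS <= 1.  Since w > 0, a vanishing integral of w * G forces G to
   vanish somewhere in every subinterval, hence, G being nonincreasing,
   everywhere on (0, M): d = 0 almost surely.  Symmetrically, WIKS = 1 means
   that w * (1 - G) integrates to 0, and the nondecreasing 1 - G = P(d <= e)
   vanishes on [0, M): d = M almost surely.  Finally
   P(d > e) = lim_k P(d >= e + 1/(k+1)), so the stochastic order on the sets
   {d >= t} passes to the integrand. *)

Lemma measurable_intM {R : realType} (M : \bar R) : measurable (intM M).
Proof.
case: M => [r| |].
- have -> : intM r%:E = [set` `[0%R, r[]; last exact: measurable_itv.
  apply/seteqP; split => x; rewrite /intM /= in_itv /= lte_fin.
    by move=> [-> ->].
  by move/andP.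
- have -> : intM +oo = [set` (`[0%R, +oo[ : interval R)]; last exact: measurable_itv.
  apply/seteqP; split => x; rewrite /intM /= in_itv /= andbT; first by case.
  by move=> x0; split; last exact: ltry.
- have -> : intM -oo = set0 :> set R; last exact: measurable0.
  by apply/seteqP; split => x // -[_]; rewrite ltNge leNye.
Qed.

Lemma lte_EFin_dense {R : realType} {e : R} {M : \bar R} :
  e%:E < M -> exists2 e' : R, (e < e')%R & e'%:E < M.
Proof.
case: M => [r| |] //.
- by rewrite lte_fin => er; exists ((e + r) / 2)%R; rewrite ?lte_fin; lra.
- by move=> _; exists (e + 1)%R; [lra|exact: ltry].
Qed.

Lemma intM_cofinal {R : realType} {M : \bar R} : 0 < M ->
  exists2 u : nat -> R, (forall k, intM M (u k)) &
    (forall e, intM M e -> exists k, (e <= u k)%R).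
Proof.
case: M => [r| |] //.
- rewrite lte_fin => r_gt0.
  exists (fun k => Num.max 0 (r - k.+1%:R^-1))%R.
    move=> k; split; first by rewrite le_max lexx.
    by rewrite lte_fin gt_max r_gt0 /= ltrBlDr ltrDl invr_gt0 ltr0n.
  move=> e [_]; rewrite lte_fin => /ltr_add_invr[k ek]; exists k.
  by rewrite le_max lerBrDr (ltW ek) orbT.
- move=> _; exists (fun k => k%:R) => [k|e _]; first by split => //; exact: ltry.
  by exists (Num.truncn e).+1; exact/ltW/truncnS_gt.
Qed.

Section level_sets.
Context {d : measure_display} {T : measurableType d} {R : realType}.
Context {f : T -> R} (mf : measurable_fun setT f).

Lemma measurable_gt (e : R) : measurable [set x | (e < f x)%R].
Proof.
have := mf measurableT _ (measurable_itv `]e, +oo[).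
by rewrite setTI; congr measurable; apply/seteqP; split => x /=; rewrite in_itv andbT.
Qed.

Lemma measurable_ge (e : R) : measurable [set x | (e <= f x)%R].
Proof.
have := mf measurableT _ (measurable_itv `[e, +oo[).
by rewrite setTI; congr measurable; apply/seteqP; split => x /=; rewrite in_itv andbT.
Qed.

Lemma setC_gt (e : R) : ~` [set x | (e < f x)%R] = [set x | (f x <= e)%R].
Proof. by apply/seteqP; split => x /=; rewrite leNgt => /negP. Qed.

Lemma measurable_le (e : R) : measurable [set x | (f x <= e)%R].
Proof. by rewrite -setC_gt; exact/measurableC/measurable_gt. Qed.

Lemma ae_le_of_measure_gt_eq0 (mu : {measure set T -> \bar R}) {a b : R} :
  (a < b)%R -> (forall e, (a < e < b)%R -> mu [set x | (e < f x)%R] = 0) ->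
  {ae mu, forall x, (f x <= a)%R}.
Proof.
move=> ab mu_gt0.
pose e k := (Num.min ((a + b) / 2) (a + k.+1%:R^-1))%R.
have e_itv k : (a < e k < b)%R.
  rewrite lt_min ltrDl invr_gt0 ltr0n gt_min andbT.
  by apply/andP; split; [|apply/orP; left]; lra.
apply: (negligibleS (A := \bigcup_k [set x | (e k < f x)%R])).
  move=> x /= /negP; rewrite -ltNge => /ltr_add_invr[k ltkx].
  by exists k => //=; rewrite gt_min ltkx orbT.
apply: negligible_bigcup => k; apply/negligibleP; first exact: measurable_gt.
exact: mu_gt0.
Qed.

Lemma ae_notin_intM_of_measure_le_eq0 (mu : {measure set T -> \bar R}) {M : \bar R} :
  0 < M -> (forall e, intM M e -> mu [set x | (f x <= e)%R] = 0) ->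
  {ae mu, forall x, ~ intM M (f x)}.
Proof.
move=> M_gt0 mu_le0; have [u uM u_cofinal] := intM_cofinal M_gt0.
apply: (negligibleS (A := \bigcup_k [set x | (f x <= u k)%R])).
  by move=> x /= /contrapT /u_cofinal[k fxu]; exists k.
apply: negligible_bigcup => k; apply/negligibleP; first exact: measurable_le.
exact: mu_le0.
Qed.

Lemma le_measure_gt (mu : {measure set T -> \bar R}) (a b : R) : (a <= b)%R ->
  mu [set x | (b < f x)%R] <= mu [set x | (a < f x)%R].
Proof.
move=> ab; apply: le_measure; rewrite ?inE; try exact: measurable_gt.
by move=> x /=; exact: le_lt_trans.
Qed.

Lemma le_measure_le (mu : {measure set T -> \bar R}) (a b : R) : (a <= b)%R ->
  mu [set x | (f x <= a)%R] <= mu [set x | (f x <= b)%R].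
Proof.
move=> ab; apply: le_measure; rewrite ?inE; try exact: measurable_le.
by move=> x /= /le_trans; exact.
Qed.

Lemma le_measure_gt_of_ge (mu nu : {measure set T -> \bar R}) (e : R) :
  (forall t, (e < t)%R -> mu [set x | (t <= f x)%R] <= nu [set x | (t <= f x)%R]) ->
  mu [set x | (e < f x)%R] <= nu [set x | (e < f x)%R].
Proof.
move=> mu_nu.
pose F k := [set x | (e + k.+1%:R^-1 <= f x)%R].
have UF : \bigcup_k F k = [set x | (e < f x)%R].
  apply/seteqP; split => x /=.
    by move=> [k _ /=]; apply: lt_le_trans; rewrite ltrDl invr_gt0 ltr0n.
  by move=> /ltr_add_invr[k ?]; exists k => //; exact: ltW.
have mF k : measurable (F k) by exact: measurable_ge.
have F_nd : nondecreasing_seq F.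
  move=> n m nm; apply/subsetPset => x /=; apply: le_trans.
  by rewrite lerD2l lef_pV2 ?posrE // ler_nat.
have mUF := bigcupT_measurable F mF.
rewrite -UF; apply: lee_cvg_to (nondecreasing_cvg_mu mF mUF F_nd)
  (nondecreasing_cvg_mu mF mUF F_nd) _.
by apply: nearW => k; apply: mu_nu; rewrite ltrDl invr_gt0 ltr0n.
Qed.

Section probability.
Variable P : probability T R.

Lemma probability_le_gt (e : R) :
  P [set x | (f x <= e)%R] = 1 - P [set x | (e < f x)%R].
Proof. by rewrite -setC_gt probability_setC //; exact: measurable_gt. Qed.

Lemma measurable_fun_probability_gt {D : set R} : measurable D ->
  measurable_fun D (fun e => P [set x | (e < f x)%R]).
Proof.
move=> mD.
have -> : (fun e => P [set x | (e < f x)%R]) =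
    EFin \o (fun e => fine (P [set x | (e < f x)%R])).
  by apply/funext => e /=; rewrite fineK // fin_num_measure //; exact: measurable_gt.
apply: measurableT_comp => //; apply: nonincreasing_measurable => // a b ab.
by rewrite fine_le ?fin_num_measure ?le_measure_gt //; exact: measurable_gt.
Qed.

Lemma measurable_fun_probability_le {D : set R} : measurable D ->
  measurable_fun D (fun e => P [set x | (f x <= e)%R]).
Proof.
move=> mD; under eq_fun do rewrite probability_le_gt.
by apply: emeasurable_funB => //; exact: measurable_fun_probability_gt.
Qed.

End probability.

End level_sets.

Lemma integral_ge0_eq0_root {R : realType} {D : set R} {g : R -> \bar R} {a b : R} :
  measurable D -> measurable_fun D g -> (forall x, D x -> 0 <= g x) ->
  \int[lebesgue_measure]_(x in D) g x = 0 ->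
  (a < b)%R -> [set` `[a, b]] `<=` D -> exists2 x, x \in `[a, b] & g x = 0.
Proof.
move=> mD mg g_ge0 g_int0 ab abD.
have : \int[lebesgue_measure]_(x in D) `|g x| = 0.
  by rewrite -g_int0; apply: eq_integral => x /set_mem Dx; rewrite gee0_abs ?g_ge0.
move/(ae_eq_integral_abs lebesgue_measure mD mg) => -[N [mN N0 gN]].
apply: contrapT => g_neq0.
have : lebesgue_measure [set` `[a, b]] <= lebesgue_measure N.
  apply: le_measure; rewrite ?inE // => x abx.
  by apply: (gN x) => /(_ (abD _ abx)) gx0; apply: g_neq0; exists x.
by rewrite N0 lebesgue_measure_itv /= lte_fin ab -EFinD lee_fin subr_le0 leNgt ab.
Qed.

Definition weighted_survival {d} {T : measurableType d} {R : realType}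
    (f : T -> R) (M : \bar R) (w : R -> \bar R) (P : probability T R) : \bar R :=
  \int[lebesgue_measure]_(e in intM M) (w e * P [set x | (e < f x)%R]).

Section weighted_survival.
Context {d : measure_display} {T : measurableType d} {R : realType}.
Context {f : T -> R} {M : \bar R} {w : R -> \bar R}.
Hypotheses (mf : measurable_fun setT f) (f_ge0 : forall x, (0 <= f x)%R)
  (f_leM : forall x, (f x)%:E <= M) (M_gt0 : 0 < M) (w_density : is_density_on M w).

Let mI : measurable (intM M) := measurable_intM M.
Let mw : measurable_fun (intM M) w. Proof. by case: w_density. Qed.
Let w_gt0 {e} : intM M e -> 0 < w e. Proof. by case: w_density => _ + _; exact. Qed.
Let w_int1 : \int[lebesgue_measure]_(e in intM M) w e = 1.
Proof. by case: w_density. Qed.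

Let wmul_ge0 {g : R -> \bar R} : (forall e, 0 <= g e) ->
  forall e, intM M e -> 0 <= w e * g e.
Proof. by move=> g_ge0 e Me; rewrite mule_ge0 // ltW // w_gt0. Qed.

Lemma wmul_integral_eq0_root {g : R -> \bar R} {a b : R} :
  measurable_fun (intM M) g -> (forall e, 0 <= g e) ->
  \int[lebesgue_measure]_(e in intM M) (w e * g e) = 0 ->
  (a < b)%R -> [set` `[a, b]] `<=` intM M -> exists2 e, e \in `[a, b] & g e = 0.
Proof.
move=> mg g_ge0 wg0 ab abM.
have [e abe /eqP] := integral_ge0_eq0_root mI (emeasurable_funM mw mg)
  (wmul_ge0 g_ge0) wg0 ab abM.
rewrite mule_eq0 => /orP[/eqP we0|/eqP ge0]; last by exists e.
by have := w_gt0 (abM e abe); rewrite we0 ltxx.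
Qed.

Let measurable_integrand (P : probability T R) :
  measurable_fun (intM M) (fun e => w e * P [set x | (e < f x)%R]).
Proof. exact: emeasurable_funM mw (measurable_fun_probability_gt mf P mI). Qed.

Lemma weighted_survival_ge0 (P : probability T R) : 0 <= weighted_survival f M w P.
Proof. by apply: integral_ge0; exact: wmul_ge0. Qed.

Lemma weighted_survival_le1 (P : probability T R) : weighted_survival f M w P <= 1.
Proof.
rewrite -w_int1; apply: ge0_le_integral => //; first exact: wmul_ge0.
  exact: measurable_integrand.
move=> e Me; rewrite -[leRHS]mule1; apply: lee_wpmul2l; first exact/ltW/w_gt0.
exact/probability_le1/measurable_gt.
Qed.

Lemma weighted_survival_eq0 (P : probability T R) :
  weighted_survival f M w P = 0 <-> {ae P, forall x, f x = 0%R}.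
Proof.
split=> [ws0|f0].
  have survival0 e : (0 < e)%R -> e%:E < M -> P [set x | (e < f x)%R] = 0.
    move=> e_gt0 eM.
    have sub : [set` `[0%R, e]] `<=` intM M.
      move=> z /=; rewrite in_itv /= => /andP[z_ge0 ze]; split => //.
      by rewrite (le_lt_trans _ eM) ?lee_fin.
    have [z /[!in_itv]/andP[_ ze] Pz0] :=
      wmul_integral_eq0_root (measurable_fun_probability_gt mf P mI)
        (fun => measure_ge0 _ _) ws0 e_gt0 sub.
    by apply/eqP; rewrite eq_le measure_ge0 andbT -Pz0 le_measure_gt.
  have [r r_gt0 rM] := lte_EFin_dense M_gt0.
  apply: filterS (ae_le_of_measure_gt_eq0 mf P r_gt0 _) => [x fx_le0|e /andP[e_gt0 er]].
    by apply/eqP; rewrite eq_le fx_le0 f_ge0.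
  by apply: survival0 => //; rewrite (lt_trans _ rM) ?lte_fin.
rewrite /weighted_survival (eq_integral (cst 0)) ?integral0 // => e /set_mem[e_ge0 _].
suff -> : P [set x | (e < f x)%R] = 0 by rewrite mule0.
apply/negligibleP; first exact: measurable_gt.
by apply: negligibleS f0 => x /= ex fx0; move: ex; rewrite fx0 ltNge e_ge0.
Qed.

Lemma weighted_survival_add_cdf (P : probability T R) :
  weighted_survival f M w P +
  \int[lebesgue_measure]_(e in intM M) (w e * P [set x | (f x <= e)%R]) = 1.
Proof.
rewrite -w_int1 -ge0_integralD //; first last.
- exact: emeasurable_funM mw (measurable_fun_probability_le mf P mI).
- by apply: wmul_ge0 => e; exact: measure_ge0.
- exact: measurable_integrand.
- by apply: wmul_ge0 => e; exact: measure_ge0.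
apply: eq_integral => e /set_mem Me.
rewrite -ge0_muleDr ?measure_ge0 // (probability_le_gt mf) addrC subeK ?mule1 //.
by rewrite fin_num_measure //; exact: measurable_gt.
Qed.

Lemma weighted_survival_eq1 (P : probability T R) :
  weighted_survival f M w P = 1 <-> {ae P, forall x, (f x)%:E = M}.
Proof.
set C := \int[lebesgue_measure]_(e in intM M) (w e * P [set x | (f x <= e)%R]).
have sum1 : weighted_survival f M w P + C = 1 := weighted_survival_add_cdf P.
have ws_eq1 : weighted_survival f M w P = 1 <-> C = 0.
  split=> [ws1|C0]; last by rewrite -sum1 C0 adde0.
  move: sum1; rewrite ws1 => /(congr1 (fun z => z - 1)).
  by rewrite [1 + C]addrC addeK // subee.
rewrite ws_eq1; split=> [C0|fM].
  have cdf0 e : intM M e -> P [set x | (f x <= e)%R] = 0.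
    move=> [e_ge0 eM]; have [e' ee' e'M] := lte_EFin_dense eM.
    have sub : [set` `[e, e']] `<=` intM M.
      move=> z /=; rewrite in_itv /= => /andP[ez ze']; split; first exact: le_trans ez.
      by rewrite (le_lt_trans _ e'M) ?lee_fin.
    have [z /[!in_itv]/andP[ez _] Pz0] :=
      wmul_integral_eq0_root (measurable_fun_probability_le mf P mI)
        (fun => measure_ge0 _ _) C0 ee' sub.
    by apply/eqP; rewrite eq_le measure_ge0 andbT -Pz0 le_measure_le.
  apply: filterS (ae_notin_intM_of_measure_le_eq0 mf P M_gt0 cdf0) => x fxM.
  apply/eqP; rewrite eq_le f_leM /= leNgt; apply/negP => fx_ltM.
  exact: fxM (conj (f_ge0 x) fx_ltM).
rewrite /C (eq_integral (cst 0)) ?integral0 // => e /set_mem[_ eM].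
suff -> : P [set x | (f x <= e)%R] = 0 by rewrite mule0.
apply/negligibleP; first exact: measurable_le.
by apply: negligibleS fM => x /= fxe fxM; move: eM; rewrite -fxM lte_fin ltNge fxe.
Qed.

Lemma le_weighted_survival (P Q : probability T R) :
  (forall t, (0 < t)%R -> P [set x | (t <= f x)%R] <= Q [set x | (t <= f x)%R]) ->
  weighted_survival f M w P <= weighted_survival f M w Q.
Proof.
move=> PQ; apply: ge0_le_integral => //;
  [exact: wmul_ge0|exact: measurable_integrand|exact: measurable_integrand|].
move=> e Me; apply: lee_wpmul2l; first exact/ltW/w_gt0.
by apply: le_measure_gt_of_ge => // t et; apply: PQ; exact: le_lt_trans Me.1 et.
Qed.

End weighted_survival.

Theorem theorem2 (dS : measure_display) (S : measurableType dS) (R : realType)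
  (post : seq S -> seq S -> probability (Dist S R * Dist S R)%type R)
  (d : Dist S R -> Dist S R -> R) (w : R -> \bar R) :
  is_distance d ->
  measurable_fun [set: (Dist S R * Dist S R)%type] (fun PQ => d PQ.1 PQ.2) ->
  0 < supdist d ->
  is_density_on (supdist d) w ->
  (forall x y : seq S,
     0 <= WIKS d w (post x y) <= 1) /\
  (forall x y : seq S,
     WIKS d w (post x y) = 0 <->
     {ae post x y, forall PQ, d PQ.1 PQ.2 = 0%R}) /\
  (forall x y : seq S,
     WIKS d w (post x y) = 1 <->
     {ae post x y, forall PQ, (d PQ.1 PQ.2)%:E = supdist d}) /\
  (forall x y x' y' : seq S,
     (forall t : R, (0 < t)%R ->
        post x y [set PQ | (t <= d PQ.1 PQ.2)%R]
        <= post x' y' [set PQ | (t <= d PQ.1 PQ.2)%R]) ->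
     WIKS d w (post x y) <= WIKS d w (post x' y')).
Proof.
move=> [d_ge0 _ _ _] md M_gt0 w_density.
have d_ge0' PQ : (0 <= d PQ.1 PQ.2)%R := d_ge0 PQ.1 PQ.2.
have d_leM PQ : (d PQ.1 PQ.2)%:E <= supdist d by apply: ereal_sup_ubound; exists PQ.
split; [|split; [|split]] => [x y|x y|x y|x y x' y'].
- by rewrite (weighted_survival_ge0 w_density) (weighted_survival_le1 md w_density).
- exact: (weighted_survival_eq0 md d_ge0' M_gt0 w_density).
- exact: (weighted_survival_eq1 md d_ge0' d_leM M_gt0 w_density).
- exact: (le_weighted_survival md w_density).
Qed.
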